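(* For every $\Sigma_1$-formula $A$, if $\mathsf{PA}_0\vdash A$ then $\mathsf{HA}_0\vdash A$. Consequently, for every $\Pi_2$-sentence $A$, if $\mathsf{PA}_0\vdash A$ then $\mathsf{HA}_0\vdash A$.
   Context: $\mathsf{HA}_0$ (resp. $\mathsf{PA}_0$) is the theory over intuitionistic (resp. classical) first-order logic with the basic axioms of arithmetic (successor, addition, multiplication, order) and induction restricted to formulas of the form $(D\to E)\to E$ with $D,E$ $\Sigma_1$-formulas. *)

From Stdlib Require Import List Arith.
Import ListNotations.

Inductive term : Type :=
| tvar : nat -> term
| tzero : term
| tsucc : term -> term
| tplus : term -> term -> term
| tmult : term -> term -> term.

Inductive form : Type :=
| fbot : form
| feq : term -> term -> form
| flt : term -> term -> form
| fand : form -> form -> form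
| f_or : form -> form -> form
| fimp : form -> form -> form
| fall : form -> form
| fex : form -> form.

Definition fneg (A : form) : form := fimp A fbot.
Definition fiff (A B : form) : form := fand (fimp A B) (fimp B A).

Fixpoint ren_term (r : nat -> nat) (t : term) : term :=
  match t with
  | tvar n => tvar (r n)
  | tzero => tzero
  | tsucc t => tsucc (ren_term r t)
  | tplus t u => tplus (ren_term r t) (ren_term r u)
  | tmult t u => tmult (ren_term r t) (ren_term r u)
  end.

Definition shift_term (t : term) : term := ren_term S t.

Definition up (s : nat -> term) : nat -> term :=
  fun n => match n with 0 => tvar 0 | S k => shift_term (s k) end.

Fixpoint subst_term (s : nat -> term) (t : term) : term :=
  match t with
  | tvar n => s n
  | tzero => tzero
  | tsucc t => tsucc (subst_term s t)
  | tplus t u => tplus (subst_term s t) (subst_term s u)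
  | tmult t u => tmult (subst_term s t) (subst_term s u)
  end.

Fixpoint subst (s : nat -> term) (A : form) : form :=
  match A with
  | fbot => fbot
  | feq t u => feq (subst_term s t) (subst_term s u)
  | flt t u => flt (subst_term s t) (subst_term s u)
  | fand A B => fand (subst s A) (subst s B)
  | f_or A B => f_or (subst s A) (subst s B)
  | fimp A B => fimp (subst s A) (subst s B)
  | fall A => fall (subst (up s) A)
  | fex A => fex (subst (up s) A)
  end.

Definition shift (A : form) : form := subst (fun n => tvar (S n)) A.

(* A[t/x_0], lowering the other free variables *)
Definition scons (t : term) (s : nat -> term) : nat -> term :=
  fun n => match n with 0 => t | S k => s k end.
Definition inst (A : form) (t : term) : form := subst (scons t tvar) A.

(* Non-logical axioms [Ax] may contain free variables, which are read
   universally: every substitution instance of an axiom may be used. *)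
Inductive prf (cl : bool) (Ax : form -> Prop) : list form -> form -> Prop :=
| r_hyp G A : In A G -> prf cl Ax G A
| r_ax G A s : Ax A -> prf cl Ax G (subst s A)
| r_impI G A B : prf cl Ax (A :: G) B -> prf cl Ax G (fimp A B)
| r_impE G A B : prf cl Ax G (fimp A B) -> prf cl Ax G A -> prf cl Ax G B
| r_andI G A B : prf cl Ax G A -> prf cl Ax G B -> prf cl Ax G (fand A B)
| r_andE1 G A B : prf cl Ax G (fand A B) -> prf cl Ax G A
| r_andE2 G A B : prf cl Ax G (fand A B) -> prf cl Ax G B
| r_orI1 G A B : prf cl Ax G A -> prf cl Ax G (f_or A B)
| r_orI2 G A B : prf cl Ax G B -> prf cl Ax G (f_or A B)
| r_orE G A B C : prf cl Ax G (f_or A B) -> prf cl Ax (A :: G) C ->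
    prf cl Ax (B :: G) C -> prf cl Ax G C
| r_botE G A : prf cl Ax G fbot -> prf cl Ax G A
| r_allI G A : prf cl Ax (map shift G) A -> prf cl Ax G (fall A)
| r_allE G A t : prf cl Ax G (fall A) -> prf cl Ax G (inst A t)
| r_exI G A t : prf cl Ax G (inst A t) -> prf cl Ax G (fex A)
| r_exE G A B : prf cl Ax G (fex A) -> prf cl Ax (A :: map shift G) (shift B) ->
    prf cl Ax G B
| r_eqrefl G t : prf cl Ax G (feq t t)
| r_eqelim G A s t : prf cl Ax G (feq s t) -> prf cl Ax G (inst A s) ->
    prf cl Ax G (inst A t)
| r_dne G A : cl = true -> prf cl Ax G (fneg (fneg A)) -> prf cl Ax G A.

(* bounded quantifiers: forall x < t. A  and  exists x < t. A
   (t must not mention the bound variable, hence shift_term) *)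
Inductive delta0 : form -> Prop :=
| d0_bot : delta0 fbot
| d0_eq t u : delta0 (feq t u)
| d0_lt t u : delta0 (flt t u)
| d0_and A B : delta0 A -> delta0 B -> delta0 (fand A B)
| d0_or A B : delta0 A -> delta0 B -> delta0 (f_or A B)
| d0_imp A B : delta0 A -> delta0 B -> delta0 (fimp A B)
| d0_ball t A : delta0 A -> delta0 (fall (fimp (flt (tvar 0) (shift_term t)) A))
| d0_bex t A : delta0 A -> delta0 (fex (fand (flt (tvar 0) (shift_term t)) A)).

Inductive sigma1 : form -> Prop :=
| s1_d0 A : delta0 A -> sigma1 A
| s1_ex A : sigma1 A -> sigma1 (fex A).

Inductive pi2 : form -> Prop :=
| p2_s1 A : sigma1 A -> pi2 A
| p2_all A : pi2 A -> pi2 (fall A).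

Fixpoint term_fv_lt (n : nat) (t : term) : Prop :=
  match t with
  | tvar k => k < n
  | tzero => True
  | tsucc t => term_fv_lt n t
  | tplus t u | tmult t u => term_fv_lt n t /\ term_fv_lt n u
  end.

Fixpoint form_fv_lt (n : nat) (A : form) : Prop :=
  match A with
  | fbot => True
  | feq t u | flt t u => term_fv_lt n t /\ term_fv_lt n u
  | fand A B | f_or A B | fimp A B => form_fv_lt n A /\ form_fv_lt n B
  | fall A | fex A => form_fv_lt (S n) A
  end.

Definition sentence (A : form) : Prop := form_fv_lt 0 A.

Definition vx := tvar 0.
Definition vy := tvar 1.

Inductive basic_ax : form -> Prop :=
| ax_succ0 : basic_ax (fneg (feq (tsucc vx) tzero))
| ax_succinj : basic_ax (fimp (feq (tsucc vx) (tsucc vy)) (feq vx vy))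
| ax_plus0 : basic_ax (feq (tplus vx tzero) vx)
| ax_plusS : basic_ax (feq (tplus vx (tsucc vy)) (tsucc (tplus vx vy)))
| ax_mult0 : basic_ax (feq (tmult vx tzero) tzero)
| ax_multS : basic_ax (feq (tmult vx (tsucc vy)) (tplus (tmult vx vy) vx))
| ax_lt0 : basic_ax (fneg (flt vx tzero))
| ax_ltS : basic_ax (fiff (flt vx (tsucc vy)) (f_or (flt vx vy) (feq vx vy))).

(* induction axiom for F, with var 0 as the induction variable and the
   other free variables as parameters:
   F(0) /\ forall x (F(x) -> F(Sx)) -> forall x F(x) *)
Definition ind_ax (F : form) : form :=
  fimp (fand (inst F tzero)
             (fall (fimp F (subst (scons (tsucc (tvar 0)) (fun k => tvar (S k))) F))))
       (fall F).

Inductive HA0_ax : form -> Prop :=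
| ha0_basic A : basic_ax A -> HA0_ax A
| ha0_ind D E : sigma1 D -> sigma1 E -> HA0_ax (ind_ax (fimp (fimp D E) E)).

Definition HA0_proves (A : form) : Prop := prf false HA0_ax [] A.
Definition PA0_proves (A : form) : Prop := prf true HA0_ax [] A.

(* Friedman's A-translation. For a formula C let neg_tr C be the Gödel–Gentzen negative
   translation with ⊥ read as C. If C is Σ_1, it sends PA_0 derivations to HA_0 derivations:
   translated basic axioms follow from the decidability of Δ_0 formulas, and the translated
   induction axiom for (D -> E) -> E is HA_0-equivalent to the induction axiom for
   (K -> C) -> C, where K is a Σ_1 formula equivalent to D ∨ E. For Σ_1 formulas A, HA_0
   proves neg_tr C A -> (A -> C) -> C; with C := A a classical proof of A thus yields an
   intuitionistic proof of (A -> A) -> A. Π_2 formulas follow by ∀-introduction. *)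

From Stdlib Require Import List.
Import ListNotations.

(** * Substitution algebra *)

Definition shift_sub : nat -> term := fun n => tvar (S n).

Definition succ_sub : nat -> term := scons (tsucc (tvar 0)) shift_sub.

Lemma subst_term_ext s s' t : (forall n, s n = s' n) -> subst_term s t = subst_term s' t.
Proof. intros H; induction t; simpl; congruence. Qed.

Lemma subst_term_comp s1 s2 t :
  subst_term s2 (subst_term s1 t) = subst_term (fun n => subst_term s2 (s1 n)) t.
Proof. induction t; simpl; congruence. Qed.

Lemma subst_term_id t : subst_term tvar t = t.
Proof. induction t; simpl; congruence. Qed.

Lemma subst_term_ext_id s t : (forall n, s n = tvar n) -> subst_term s t = t.
Proof. intros H; rewrite (subst_term_ext s tvar t H); apply subst_term_id. Qed.

Lemma shift_term_subst t : shift_term t = subst_term shift_sub t.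
Proof. unfold shift_term; induction t; simpl; congruence || reflexivity. Qed.

Lemma subst_term_shift s t : subst_term s (shift_term t) = subst_term (fun n => s (S n)) t.
Proof. rewrite shift_term_subst, subst_term_comp; reflexivity. Qed.

Lemma shift_subst_term s t :
  shift_term (subst_term s t) = subst_term (fun n => shift_term (s n)) t.
Proof.
  rewrite shift_term_subst, subst_term_comp.
  apply subst_term_ext; intro; now rewrite shift_term_subst.
Qed.

Lemma subst_term_up_shift s t : subst_term (up s) (shift_term t) = shift_term (subst_term s t).
Proof. rewrite subst_term_shift, shift_subst_term; reflexivity. Qed.

Lemma inst_term_shift t u : subst_term (scons u tvar) (shift_term t) = t.
Proof. rewrite subst_term_shift; apply subst_term_ext_id; reflexivity. Qed.

Lemma up_ext s s' : (forall n, s n = s' n) -> forall n, up s n = up s' n.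
Proof. intros H [|n]; simpl; [reflexivity | now rewrite H]. Qed.

Lemma subst_ext A : forall s s', (forall n, s n = s' n) -> subst s A = subst s' A.
Proof.
  induction A; intros s s' H; simpl; f_equal; auto using subst_term_ext, up_ext.
Qed.

Lemma up_comp s1 s2 n :
  subst_term (up s2) (up s1 n) = up (fun n => subst_term s2 (s1 n)) n.
Proof. destruct n; simpl; [reflexivity | apply subst_term_up_shift]. Qed.

Lemma subst_comp A : forall s1 s2,
  subst s2 (subst s1 A) = subst (fun n => subst_term s2 (s1 n)) A.
Proof.
  induction A; intros s1 s2; simpl; f_equal; auto using subst_term_comp;
    rewrite IHA; apply subst_ext; intro; apply up_comp.
Qed.

Lemma subst_ext_id A : forall s, (forall n, s n = tvar n) -> subst s A = A.
Proof.
  induction A; intros s H; simpl; f_equal; auto using subst_term_ext_id;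
    apply IHA; intros [|n]; simpl; try rewrite H; reflexivity.
Qed.

Lemma subst_id A : subst tvar A = A.
Proof. apply subst_ext_id; reflexivity. Qed.

Lemma subst_up_shift s A : subst (up s) (shift A) = shift (subst s A).
Proof.
  unfold shift; rewrite !subst_comp; apply subst_ext; intro n; simpl.
  now rewrite shift_term_subst.
Qed.

Lemma map_subst_up_shift s G :
  map (subst (up s)) (map shift G) = map shift (map (subst s) G).
Proof. rewrite !map_map; apply map_ext, subst_up_shift. Qed.

Lemma inst_shift A t : inst (shift A) t = A.
Proof. unfold inst, shift; rewrite subst_comp; apply subst_ext_id; reflexivity. Qed.

Lemma inst_up_shift A : inst (subst (up shift_sub) A) (tvar 0) = A.
Proof. unfold inst; rewrite subst_comp; apply subst_ext_id; intros [|n]; reflexivity. Qed.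

Lemma inst_up s A t : inst (subst (up s) A) t = subst (scons t s) A.
Proof.
  unfold inst; rewrite subst_comp; apply subst_ext; intros [|n]; simpl;
    [reflexivity | apply inst_term_shift].
Qed.

Lemma subst_inst s A t : subst s (inst A t) = inst (subst (up s) A) (subst_term s t).
Proof.
  rewrite inst_up; unfold inst; rewrite subst_comp; apply subst_ext.
  intros [|n]; reflexivity.
Qed.

Lemma subst_ind_ax s F : subst s (ind_ax F) = ind_ax (subst (up s) F).
Proof.
  unfold ind_ax; simpl; rewrite subst_inst; do 4 f_equal.
  rewrite !subst_comp; apply subst_ext; intros [|n]; simpl; [reflexivity|].
  now rewrite subst_term_shift, shift_term_subst.
Qed.

Lemma delta0_subst A : delta0 A -> forall s, delta0 (subst s A).
Proof.
  induction 1; intro s; simpl; try (constructor; auto; fail);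
    rewrite subst_term_up_shift; constructor; auto.
Qed.

Lemma sigma1_subst A : sigma1 A -> forall s, sigma1 (subst s A).
Proof.
  induction 1; intro s; simpl; [apply s1_d0, delta0_subst | apply s1_ex]; auto.
Qed.

Lemma prf_weaken cl Ax G A : prf cl Ax G A -> forall G', incl G G' -> prf cl Ax G' A.
Proof.
  assert (incl_cc : forall (X : form) G G', incl G G' -> incl (X :: G) (X :: G'))
    by (intros X G0 G0' H; apply incl_cons; [left | apply incl_tl]; auto).
  induction 1; intros G' Hi.
  - apply r_hyp; auto.
  - apply r_ax; auto.
  - apply r_impI; auto.
  - eapply r_impE; eauto.
  - apply r_andI; auto.
  - eapply r_andE1; eauto.
  - eapply r_andE2; eauto.
  - apply r_orI1; auto.
  - apply r_orI2; auto.
  - eapply r_orE; eauto.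
  - apply r_botE; auto.
  - apply r_allI, IHprf, incl_map, Hi.
  - apply r_allE; auto.
  - eapply r_exI; eauto.
  - eapply r_exE; eauto using incl_map.
  - apply r_eqrefl.
  - eapply r_eqelim; eauto.
  - apply r_dne; auto.
Qed.

Lemma prf_subst cl Ax G A :
  prf cl Ax G A -> forall s, prf cl Ax (map (subst s) G) (subst s A).
Proof.
  induction 1; intros s'; simpl in *.
  - apply r_hyp, in_map, H.
  - rewrite subst_comp; apply r_ax, H.
  - apply r_impI, IHprf.
  - eapply r_impE; eauto.
  - apply r_andI; auto.
  - eapply r_andE1; apply IHprf.
  - eapply r_andE2; apply IHprf.
  - apply r_orI1; auto.
  - apply r_orI2; auto.
  - eapply r_orE; [apply IHprf1 | apply IHprf2 | apply IHprf3].
  - apply r_botE, IHprf.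
  - apply r_allI; rewrite <- map_subst_up_shift; apply IHprf.
  - rewrite subst_inst; apply r_allE, IHprf.
  - eapply r_exI; rewrite <- subst_inst; apply IHprf.
  - eapply r_exE; [apply IHprf1 |].
    rewrite <- map_subst_up_shift, <- subst_up_shift; apply (IHprf2 (up s')).
  - apply r_eqrefl.
  - rewrite subst_inst; eapply r_eqelim; [apply IHprf1 |].
    rewrite <- subst_inst; apply IHprf2.
  - apply r_dne; auto.
Qed.

Notation "G ⊢ A" := (prf false HA0_ax G A) (at level 70).

Ltac by_hyp := apply r_hyp; simpl; tauto.

Lemma hyp0 G A : A :: G ⊢ A.
Proof. by_hyp. Qed.
Lemma hyp1 G A B : B :: A :: G ⊢ A.
Proof. by_hyp. Qed.
Lemma hyp2 G A B C : C :: B :: A :: G ⊢ A.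
Proof. by_hyp. Qed.
Lemma hyp3 G A B C D : D :: C :: B :: A :: G ⊢ A.
Proof. by_hyp. Qed.

Lemma wk G A B : G ⊢ A -> B :: G ⊢ A.
Proof. intros H; eapply prf_weaken; [exact H | apply incl_tl, incl_refl]. Qed.

Lemma mp G A B : G ⊢ fimp A B -> G ⊢ A -> G ⊢ B.
Proof. apply r_impE. Qed.

Lemma prf_closed G X : [] ⊢ X -> G ⊢ X.
Proof. intros H; eapply prf_weaken; [exact H | intros x []]. Qed.

Lemma prf_closed_subst G s X : [] ⊢ X -> G ⊢ subst s X.
Proof. intros H; apply prf_closed, (prf_subst _ _ _ _ H s). Qed.

Lemma mp_closed G A B : [] ⊢ fimp A B -> G ⊢ A -> G ⊢ B.
Proof. intros H; apply mp, prf_closed, H. Qed.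

Lemma prf_shift G X : G ⊢ X -> map shift G ⊢ shift X.
Proof. intros H; apply (prf_subst _ _ _ _ H shift_sub). Qed.

Lemma allE_var0 G X : G ⊢ shift (fall X) -> G ⊢ X.
Proof. intros H; rewrite <- (inst_up_shift X); apply r_allE, H. Qed.

Lemma exI_var0 G X : G ⊢ X -> G ⊢ shift (fex X).
Proof. intros H; simpl; eapply r_exI; rewrite inst_up_shift; exact H. Qed.

Lemma ax_inst G A s : HA0_ax A -> G ⊢ subst s A.
Proof. apply r_ax. Qed.

Lemma ind_rule G F : sigma1 F -> G ⊢ inst F tzero ->
  map shift G ⊢ fimp F (subst succ_sub F) -> G ⊢ fall F.
Proof.
  intros HF H0 HS.
  (* the axiom for [(⊥ -> F) -> F], which is equivalent to [F] *)
  pose proof (ax_inst G _ tvar (ha0_ind fbot F (s1_d0 _ d0_bot) HF)) as Hax.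
  rewrite subst_id in Hax.
  assert (Hall : G ⊢ fall (fimp (fimp fbot F) F)).
  { eapply mp; [exact Hax |]; apply r_andI.
    - apply r_impI, wk, H0.
    - apply r_allI; cbn -[subst]; apply r_impI, r_impI.
      eapply mp; [apply wk, wk, HS |].
      eapply mp; [apply hyp1 | apply r_impI, r_botE, hyp0]. }
  apply r_allI; eapply mp; [apply allE_var0, prf_shift, Hall |].
  apply r_impI, r_botE, hyp0.
Qed.

Lemma ind_open F : sigma1 F -> [] ⊢ inst F tzero -> [] ⊢ fimp F (subst succ_sub F) -> [] ⊢ F.
Proof. intros HF H0 HS; apply allE_var0, (prf_shift [] (fall F)), ind_rule; auto. Qed.

Lemma eq_rewrite G A s a b :
  G ⊢ feq a b -> G ⊢ subst (scons a s) A -> G ⊢ subst (scons b s) A.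
Proof. rewrite <- !inst_up; apply r_eqelim. Qed.

Lemma eq_sym G a b : G ⊢ feq a b -> G ⊢ feq b a.
Proof.
  intros H; exact (eq_rewrite G (feq (tvar 0) (tvar 1)) (scons a tvar) a b H (r_eqrefl _ _ _ a)).
Qed.

Lemma eq_succ G a b : G ⊢ feq a b -> G ⊢ feq (tsucc a) (tsucc b).
Proof.
  intros H.
  exact (eq_rewrite G (feq (tsucc (tvar 1)) (tsucc (tvar 0))) (scons a tvar) a b H
           (r_eqrefl _ _ _ _)).
Qed.

Lemma lt_rew_l G a b c : G ⊢ feq a b -> G ⊢ flt a c -> G ⊢ flt b c.
Proof. apply (eq_rewrite G (flt (tvar 0) (tvar 1)) (scons c tvar)). Qed.

Lemma lt_rew_r G a b c : G ⊢ feq a b -> G ⊢ flt c a -> G ⊢ flt c b.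
Proof. apply (eq_rewrite G (flt (tvar 1) (tvar 0)) (scons c tvar)). Qed.

Lemma ax_ltS_inst G a b :
  G ⊢ fiff (flt a (tsucc b)) (f_or (flt a b) (feq a b)).
Proof. exact (ax_inst G _ (scons a (scons b tvar)) (ha0_basic _ ax_ltS)). Qed.

Lemma lt_succ_r_elim G a b : G ⊢ flt a (tsucc b) -> G ⊢ f_or (flt a b) (feq a b).
Proof. apply mp; eapply r_andE1, ax_ltS_inst. Qed.

Lemma lt_succ_r_of_lt G a b : G ⊢ flt a b -> G ⊢ flt a (tsucc b).
Proof. intros H; eapply mp; [eapply r_andE2, ax_ltS_inst | apply r_orI1, H]. Qed.

Lemma lt_succ_r_of_eq G a b : G ⊢ feq a b -> G ⊢ flt a (tsucc b).
Proof. intros H; eapply mp; [eapply r_andE2, ax_ltS_inst | apply r_orI2, H]. Qed.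

Lemma lt_succ_self G a : G ⊢ flt a (tsucc a).
Proof. apply lt_succ_r_of_eq, r_eqrefl. Qed.

Lemma lt_zero_elim G a C : G ⊢ flt a tzero -> G ⊢ C.
Proof.
  intros H; apply r_botE; eapply mp; [| exact H].
  exact (ax_inst G _ (scons a tvar) (ha0_basic _ ax_lt0)).
Qed.

Ltac delta0_auto := repeat first [apply s1_d0 | constructor].

(* Facts about terms are proved for variables by induction on [tvar 0], then instantiated. *)
Lemma lt_succ_l_var :
  [] ⊢ fimp (flt (tvar 1) (tvar 0))
            (f_or (flt (tsucc (tvar 1)) (tvar 0)) (feq (tsucc (tvar 1)) (tvar 0))).
Proof.
  apply ind_open; [delta0_auto | apply r_impI; eapply lt_zero_elim, hyp0 |].
  simpl; apply r_impI, r_impI; eapply r_orE; [apply lt_succ_r_elim, hyp0 | |].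
  - eapply r_orE; [eapply mp; [apply hyp2 | apply hyp0] | |].
    + apply r_orI1, lt_succ_r_of_lt, hyp0.
    + apply r_orI1, lt_succ_r_of_eq, hyp0.
  - apply r_orI2, eq_succ, hyp0.
Qed.

Lemma lt_succ_l G a b :
  G ⊢ flt a b -> G ⊢ f_or (flt (tsucc a) b) (feq (tsucc a) b).
Proof. apply mp, (prf_closed_subst G (scons b (scons a tvar)) _ lt_succ_l_var). Qed.

Lemma zero_le_var : [] ⊢ f_or (flt tzero (tvar 0)) (feq tzero (tvar 0)).
Proof.
  apply ind_open; [delta0_auto | apply r_orI2, r_eqrefl |].
  simpl; apply r_impI; eapply r_orE; [apply hyp0 | |];
    apply r_orI1; [apply lt_succ_r_of_lt | apply lt_succ_r_of_eq]; apply hyp0.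
Qed.

Lemma lt_trichotomy_var :
  [] ⊢ f_or (flt (tvar 0) (tvar 1)) (f_or (feq (tvar 0) (tvar 1)) (flt (tvar 1) (tvar 0))).
Proof.
  apply ind_open; [delta0_auto | |].
  - eapply r_orE; [exact (prf_closed_subst [] tvar _ zero_le_var) | |].
    + apply r_orI1, hyp0.
    + apply r_orI2, r_orI1, hyp0.
  - simpl; apply r_impI; eapply r_orE; [apply hyp0 | |].
    + eapply r_orE; [apply lt_succ_l, hyp0 | |].
      * apply r_orI1, hyp0.
      * apply r_orI2, r_orI1, hyp0.
    + apply r_orI2, r_orI2; eapply r_orE; [apply hyp0 | |].
      * eapply lt_rew_l; [apply hyp0 | apply lt_succ_self].
      * apply lt_succ_r_of_lt, hyp0.
Qed.

Lemma lt_trichotomy G a b : G ⊢ f_or (flt a b) (f_or (feq a b) (flt b a)).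
Proof. exact (prf_closed_subst G (scons a (scons b tvar)) _ lt_trichotomy_var). Qed.

Lemma lt_of_succ_lt_var : [] ⊢ fimp (flt (tsucc (tvar 1)) (tvar 0)) (flt (tvar 1) (tvar 0)).
Proof.
  apply ind_open; [delta0_auto | apply r_impI; eapply lt_zero_elim, hyp0 |].
  simpl; apply r_impI, r_impI; apply lt_succ_r_of_lt.
  eapply r_orE; [apply lt_succ_r_elim, hyp0 | |].
  - eapply mp; [apply hyp2 | apply hyp0].
  - eapply lt_rew_r; [apply hyp0 | apply lt_succ_self].
Qed.

Lemma lt_of_succ_lt G a b : G ⊢ flt (tsucc a) b -> G ⊢ flt a b.
Proof. apply mp, (prf_closed_subst G (scons b (scons a tvar)) _ lt_of_succ_lt_var). Qed.

Lemma lt_of_succ_lt_succ G a b : G ⊢ flt (tsucc a) (tsucc b) -> G ⊢ flt a b.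
Proof.
  intros H; eapply r_orE; [apply lt_succ_r_elim, H | |].
  - apply lt_of_succ_lt, hyp0.
  - eapply lt_rew_r; [apply hyp0 | apply lt_succ_self].
Qed.

Lemma lt_irrefl_var : [] ⊢ fneg (flt (tvar 0) (tvar 0)).
Proof.
  apply ind_open; [delta0_auto | apply r_impI; eapply lt_zero_elim, hyp0 |].
  simpl; apply r_impI, r_impI; eapply mp; [apply hyp1 | apply lt_of_succ_lt_succ, hyp0].
Qed.

Lemma lt_irrefl G a C : G ⊢ flt a a -> G ⊢ C.
Proof.
  intros H; apply r_botE; eapply mp; [| exact H].
  exact (prf_closed_subst G (scons a tvar) _ lt_irrefl_var).
Qed.

Lemma lt_trans_var :
  [] ⊢ fimp (flt (tvar 1) (tvar 2)) (fimp (flt (tvar 2) (tvar 0)) (flt (tvar 1) (tvar 0))).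
Proof.
  apply ind_open; [delta0_auto | apply r_impI, r_impI; eapply lt_zero_elim, hyp0 |].
  simpl; apply r_impI, r_impI, r_impI, lt_succ_r_of_lt.
  eapply r_orE; [apply lt_succ_r_elim, hyp0 | |].
  - eapply mp; [eapply mp; by_hyp | apply hyp0].
  - eapply lt_rew_r; [apply hyp0 | apply hyp2].
Qed.

Lemma lt_trans G a b c : G ⊢ flt a b -> G ⊢ flt b c -> G ⊢ flt a c.
Proof.
  intros H H'.
  eapply mp; [eapply mp; [| exact H] | exact H'].
  exact (prf_closed_subst G (scons c (scons a (scons b tvar))) _ lt_trans_var).
Qed.

(** * Decidability of bounded formulas *)

Notation ball t A := (fall (fimp (flt (tvar 0) (shift_term t)) A)).
Notation bex t A := (fex (fand (flt (tvar 0) (shift_term t)) A)).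

Definition dec (A : form) : form := f_or A (fneg A).

Lemma eq_dec G a b : G ⊢ dec (feq a b).
Proof.
  eapply r_orE; [apply lt_trichotomy | |].
  - apply r_orI2, r_impI; eapply lt_irrefl, lt_rew_r; [apply eq_sym, hyp0 | apply hyp1].
  - eapply r_orE; [apply hyp0 | apply r_orI1, hyp0 |].
    apply r_orI2, r_impI; eapply lt_irrefl, lt_rew_r; [apply hyp0 | apply hyp1].
Qed.

Lemma lt_dec G a b : G ⊢ dec (flt a b).
Proof.
  eapply r_orE; [apply lt_trichotomy | apply r_orI1, hyp0 |].
  apply r_orI2, r_impI; eapply r_orE; [apply hyp1 | |].
  - eapply lt_irrefl, lt_rew_l; [apply hyp0 | apply hyp1].
  - eapply lt_irrefl, lt_trans; [apply hyp1 | apply hyp0].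
Qed.

Lemma dec_and G A B : G ⊢ dec A -> G ⊢ dec B -> G ⊢ dec (fand A B).
Proof.
  intros HA HB; eapply r_orE; [exact HA | |]; (eapply r_orE; [apply wk, HB | |]).
  - apply r_orI1, r_andI; [apply hyp1 | apply hyp0].
  - apply r_orI2, r_impI; eapply mp; [apply hyp1 | eapply r_andE2, hyp0].
  - apply r_orI2, r_impI; eapply mp; [apply hyp2 | eapply r_andE1, hyp0].
  - apply r_orI2, r_impI; eapply mp; [apply hyp2 | eapply r_andE1, hyp0].
Qed.

Lemma dec_or G A B : G ⊢ dec A -> G ⊢ dec B -> G ⊢ dec (f_or A B).
Proof.
  intros HA HB; eapply r_orE; [exact HA | apply r_orI1, r_orI1, hyp0 |].
  eapply r_orE; [apply wk, HB | apply r_orI1, r_orI2, hyp0 |].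
  apply r_orI2, r_impI; eapply r_orE; [apply hyp0 | |].
  - eapply mp; [apply hyp3 | apply hyp0].
  - eapply mp; [apply hyp2 | apply hyp0].
Qed.

Lemma dec_imp G A B : G ⊢ dec A -> G ⊢ dec B -> G ⊢ dec (fimp A B).
Proof.
  intros HA HB; eapply r_orE; [exact HA | |]; (eapply r_orE; [apply wk, HB | |]).
  - apply r_orI1, r_impI, hyp1.
  - apply r_orI2, r_impI; eapply mp; [apply hyp1 | eapply mp; [apply hyp0 | apply hyp2]].
  - apply r_orI1, r_impI, hyp1.
  - apply r_orI1, r_impI, r_botE; eapply mp; [apply hyp2 | apply hyp0].
Qed.

Lemma dec_neg G A : G ⊢ dec A -> G ⊢ dec (fneg A).
Proof. intros HA; apply dec_imp; [exact HA | apply r_orI2, r_impI, hyp0]. Qed.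

Lemma subst_up_scons_up_shift t s A :
  subst (up (scons t s)) (subst (up shift_sub) A) = subst (up s) A.
Proof. rewrite subst_comp; apply subst_ext; intros [|n]; reflexivity. Qed.

(* Induction on the bound [y = tvar 0]; under the binder, [A'] reads [x] as [tvar 0]. *)
Lemma bounded_all_or_ex_not_var A : delta0 A -> [] ⊢ dec A ->
  let A' := subst (up shift_sub) A in
  [] ⊢ f_or (ball (tvar 0) A') (bex (tvar 0) (fneg A')).
Proof.
  intros HA Hdec A'; apply ind_open.
  - apply s1_d0, d0_or; constructor; repeat constructor; apply delta0_subst, HA.
  - apply r_orI1, r_allI, r_impI; eapply lt_zero_elim, hyp0.
  - unfold A', succ_sub; simpl; rewrite subst_up_scons_up_shift; fold A'.
    apply r_impI; eapply r_orE; [apply hyp0 | |].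
    + eapply r_orE; [apply prf_closed, Hdec | |].
      * apply r_orI1, r_allI, r_impI; eapply r_orE; [apply lt_succ_r_elim, hyp0 | |].
        -- eapply mp; [apply allE_var0; by_hyp | apply hyp0].
        -- (* [x = y] turns [A(y)], i.e. [shift A] in the shifted context, into [A'] *)
           apply (eq_rewrite _ A (fun k => shift_term (shift_sub k)) (tvar 1));
             [apply eq_sym, hyp0 |].
           replace (subst _ A) with (shift A) by (apply subst_ext; now intros []).
           by_hyp.
      * assert (Hwit :
          inst (fand (flt (tvar 0) (shift_term (tsucc (tvar 0)))) (fimp A' fbot)) (tvar 0)
          = fand (flt (tvar 0) (tsucc (tvar 0))) (fneg A))
          by (unfold inst; simpl; f_equal; exact (inst_up_shift (fneg A))).
        apply r_orI2; apply r_exI with (t := tvar 0); rewrite Hwit.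
        apply r_andI; [apply lt_succ_self | apply hyp0].
    + apply r_orI2; eapply r_exE; [apply hyp0 |]; apply exI_var0.
      apply r_andI; [apply lt_succ_r_of_lt; eapply r_andE1, hyp0 | eapply r_andE2, hyp0].
Qed.

Lemma bounded_all_or_ex_not A t : delta0 A -> [] ⊢ dec A ->
  [] ⊢ f_or (ball t A) (bex t (fneg A)).
Proof.
  intros HA Hdec.
  pose proof (prf_closed_subst [] (scons t tvar) _ (bounded_all_or_ex_not_var A HA Hdec)) as H.
  simpl in H; rewrite subst_up_scons_up_shift, subst_ext_id in H; [exact H |].
  now intros [].
Qed.

Lemma dec_ball A t : delta0 A -> [] ⊢ dec A -> [] ⊢ dec (ball t A).
Proof.
  intros HA Hdec; eapply r_orE; [apply (bounded_all_or_ex_not A t HA Hdec) | apply r_orI1, hyp0 |].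
  apply r_orI2, r_impI; eapply r_exE; [apply hyp1 |].
  eapply mp; [eapply r_andE2, hyp0 |].
  eapply mp; [apply allE_var0; by_hyp | eapply r_andE1, hyp0].
Qed.

Lemma dec_bex A t : delta0 A -> [] ⊢ dec A -> [] ⊢ dec (bex t A).
Proof.
  intros HA Hdec.
  assert (HnA : delta0 (fneg A)) by (apply d0_imp; [exact HA | constructor]).
  eapply r_orE; [apply (bounded_all_or_ex_not _ t HnA), dec_neg, Hdec | |].
  - apply r_orI2, r_impI; eapply r_exE; [apply hyp0 |].
    eapply mp; [| eapply r_andE2, hyp0].
    eapply mp; [apply allE_var0; by_hyp | eapply r_andE1, hyp0].
  - apply r_orI1; eapply r_exE; [apply hyp0 |]; apply exI_var0.
    apply r_andI; [eapply r_andE1, hyp0 |].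
    eapply r_orE; [apply prf_closed, Hdec | apply hyp0 |].
    apply r_botE; eapply mp; [eapply r_andE2, hyp1 | apply hyp0].
Qed.

Lemma delta0_dec G A : delta0 A -> G ⊢ dec A.
Proof.
  intros HA; apply prf_closed; induction HA.
  - apply r_orI2, r_impI, hyp0.
  - apply eq_dec.
  - apply lt_dec.
  - apply dec_and; auto.
  - apply dec_or; auto.
  - apply dec_imp; auto.
  - apply dec_ball; auto.
  - apply dec_bex; auto.
Qed.

Lemma ball_markov A t : delta0 A -> [] ⊢ fimp (fneg (ball t A)) (bex t (fneg A)).
Proof.
  intros HA; apply r_impI.
  eapply r_orE; [apply prf_closed, bounded_all_or_ex_not, delta0_dec; exact HA | |].
  - apply r_botE; eapply mp; [apply hyp1 | apply hyp0].
  - apply hyp0.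
Qed.

(** * The negative translation relative to a formula [C] *)

Definition dneg (C X : form) : form := fimp (fimp X C) C.

Fixpoint neg_tr (C : form) (A : form) : form :=
  match A with
  | fbot => C
  | feq t u => dneg C (feq t u)
  | flt t u => dneg C (flt t u)
  | fand A B => fand (neg_tr C A) (neg_tr C B)
  | f_or A B => dneg C (f_or (neg_tr C A) (neg_tr C B))
  | fimp A B => fimp (neg_tr C A) (neg_tr C B)
  | fall A => fall (neg_tr (shift C) A)
  | fex A => dneg C (fex (neg_tr (shift C) A))
  end.

Lemma neg_tr_subst A : forall s C, subst s (neg_tr C A) = neg_tr (subst s C) (subst s A).
Proof.
  induction A; intros s C; simpl; rewrite ?IHA1, ?IHA2, ?IHA, ?subst_up_shift; reflexivity.
Qed.

Lemma neg_tr_shift C B : neg_tr (shift C) (shift B) = shift (neg_tr C B).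
Proof. unfold shift at 3; rewrite neg_tr_subst; reflexivity. Qed.

Lemma map_neg_tr_shift C G : map (neg_tr (shift C)) (map shift G) = map shift (map (neg_tr C) G).
Proof. rewrite !map_map; apply map_ext; intro; apply neg_tr_shift. Qed.

Lemma neg_tr_inst C A t : neg_tr C (inst A t) = inst (neg_tr (shift C) A) t.
Proof.
  unfold inst at 2; rewrite neg_tr_subst; fold (inst (shift C) t); now rewrite inst_shift.
Qed.

Lemma neg_tr_ind_ax C F : neg_tr C (ind_ax F) = ind_ax (neg_tr (shift C) F).
Proof.
  unfold ind_ax; simpl; rewrite neg_tr_inst; do 4 f_equal.
  rewrite neg_tr_subst; f_equal; unfold shift; rewrite subst_comp; apply subst_ext; reflexivity.
Qed.

Lemma dneg_intro G C X : G ⊢ X -> G ⊢ dneg C X.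
Proof. intros H; apply r_impI; eapply mp; [apply hyp0 | apply wk, H]. Qed.

Lemma dneg_dneg C Y : [] ⊢ fimp (dneg C (dneg C Y)) (dneg C Y).
Proof.
  apply r_impI, r_impI; eapply mp; [apply hyp1 |].
  apply r_impI; eapply mp; [apply hyp0 | apply hyp1].
Qed.

Lemma dneg_map C X Y : [] ⊢ fimp X Y -> [] ⊢ fimp (dneg C X) (dneg C Y).
Proof.
  intros H; apply r_impI, r_impI; eapply mp; [apply hyp1 |].
  apply r_impI; eapply mp; [apply hyp1 | eapply mp_closed; [exact H | apply hyp0]].
Qed.

Lemma neg_tr_of_C A : forall C, [] ⊢ fimp C (neg_tr C A).
Proof.
  induction A; intros C; simpl; apply r_impI.
  - apply hyp0.
  - apply r_impI, hyp1.
  - apply r_impI, hyp1.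
  - apply r_andI; eapply mp_closed; [apply IHA1 | apply hyp0 | apply IHA2 | apply hyp0].
  - apply r_impI, hyp1.
  - apply r_impI; eapply mp_closed; [apply IHA2 | apply hyp1].
  - apply r_allI; eapply mp_closed; [apply IHA | apply hyp0].
  - apply r_impI, hyp1.
Qed.

Lemma neg_tr_stable A : forall C, [] ⊢ fimp (dneg C (neg_tr C A)) (neg_tr C A).
Proof.
  induction A; intros C; simpl; try apply dneg_dneg.
  - apply r_impI; eapply mp; [apply hyp0 | apply r_impI, hyp0].
  - apply r_impI, r_andI; [eapply mp_closed; [apply IHA1 |] | eapply mp_closed; [apply IHA2 |]];
      (eapply mp_closed; [apply dneg_map | apply hyp0]); apply r_impI;
      [eapply r_andE1 | eapply r_andE2]; apply hyp0.
  - apply r_impI, r_impI; eapply mp_closed; [apply IHA2 |]; apply r_impI.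
    eapply mp; [apply hyp2 |]; apply r_impI.
    eapply mp; [apply hyp1 | eapply mp; [apply hyp0 | apply hyp2]].
  - apply r_impI, r_allI; eapply mp_closed; [apply IHA |]; apply r_impI.
    apply (mp _ (shift (fimp (fall (neg_tr (shift C) A)) C))); [by_hyp |].
    apply r_impI; eapply mp; [apply hyp1 | apply allE_var0, hyp0].
Qed.

Lemma dneg_elim G C X B : G ⊢ dneg C X -> X :: G ⊢ neg_tr C B -> G ⊢ neg_tr C B.
Proof.
  intros HX HB; eapply mp_closed; [apply neg_tr_stable |].
  apply r_impI; eapply mp; [apply wk, HX |].
  apply r_impI; eapply mp; [apply hyp1 |].
  eapply prf_weaken; [exact HB | intros x [<- | Hx]; simpl; tauto].
Qed.

(** * The translation of [Σ_1] formulas *)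

Definition tr_faithful (C A : form) : Prop :=
  [] ⊢ fimp A (neg_tr C A) /\ [] ⊢ fimp (neg_tr C A) (f_or A C).

Lemma dneg_faithful C P : [] ⊢ dec P ->
  [] ⊢ fimp P (dneg C P) /\ [] ⊢ fimp (dneg C P) (f_or P C).
Proof.
  intros Hdec; split; apply r_impI; [apply dneg_intro, hyp0 |].
  eapply r_orE; [apply prf_closed, Hdec | apply r_orI1, hyp0 |].
  apply r_orI2; eapply mp; [apply hyp1 |].
  apply r_impI, r_botE; eapply mp; [apply hyp1 | apply hyp0].
Qed.

Lemma faithful_and C A B : tr_faithful C A -> tr_faithful C B -> tr_faithful C (fand A B).
Proof.
  intros [f1 b1] [f2 b2]; split; apply r_impI; simpl.
  - apply r_andI; [eapply mp_closed; [exact f1 | eapply r_andE1, hyp0]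
                  | eapply mp_closed; [exact f2 | eapply r_andE2, hyp0]].
  - eapply r_orE; [eapply mp_closed; [exact b1 | eapply r_andE1, hyp0] | | apply r_orI2, hyp0].
    eapply r_orE; [eapply mp_closed; [exact b2 | eapply r_andE2, hyp1] | | apply r_orI2, hyp0].
    apply r_orI1, r_andI; [apply hyp1 | apply hyp0].
Qed.

Lemma faithful_or C A B : delta0 A -> delta0 B ->
  tr_faithful C A -> tr_faithful C B -> tr_faithful C (f_or A B).
Proof.
  intros HA HB [f1 b1] [f2 b2]; split; apply r_impI; simpl.
  - apply dneg_intro; eapply r_orE; [apply hyp0 | apply r_orI1 | apply r_orI2];
      (eapply mp_closed; [eassumption | apply hyp0]).
  - eapply r_orE; [apply (delta0_dec _ (f_or A B)); constructor; auto | apply r_orI1, hyp0 |].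
    apply r_orI2; eapply mp; [apply hyp1 |]; apply r_impI.
    eapply r_orE; [apply hyp0 | |].
    + eapply r_orE; [eapply mp_closed; [exact b1 | apply hyp0] | | apply hyp0].
      apply r_botE; eapply mp; [apply hyp3 | apply r_orI1, hyp0].
    + eapply r_orE; [eapply mp_closed; [exact b2 | apply hyp0] | | apply hyp0].
      apply r_botE; eapply mp; [apply hyp3 | apply r_orI2, hyp0].
Qed.

Lemma faithful_imp C A B : delta0 A ->
  tr_faithful C A -> tr_faithful C B -> tr_faithful C (fimp A B).
Proof.
  intros HA [f1 b1] [f2 b2]; split; apply r_impI; simpl.
  - apply r_impI; eapply r_orE; [eapply mp_closed; [exact b1 | apply hyp0] | |].
    + eapply mp_closed; [exact f2 |]; eapply mp; [apply hyp2 | apply hyp0].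
    + eapply mp_closed; [apply neg_tr_of_C | apply hyp0].
  - eapply r_orE; [apply (delta0_dec _ A HA) | |].
    + eapply r_orE; [eapply mp_closed; [exact b2 |] | apply r_orI1, r_impI, hyp1
                    | apply r_orI2, hyp0].
      eapply mp; [apply hyp1 | eapply mp_closed; [exact f1 | apply hyp0]].
    + apply r_orI1, r_impI, r_botE; eapply mp; [apply hyp1 | apply hyp0].
Qed.

Lemma faithful_ball C A t : delta0 A -> tr_faithful (shift C) A -> tr_faithful C (ball t A).
Proof.
  intros HA [f1 b1]; split; apply r_impI; simpl.
  - apply r_allI, r_impI; eapply r_orE; [apply lt_dec | |].
    + eapply mp_closed; [exact f1 |]; eapply mp; [apply allE_var0; by_hyp | apply hyp0].
    + eapply mp_closed; [apply neg_tr_of_C |]; eapply mp; [apply hyp1 |].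
      apply r_impI, r_botE; eapply mp; [apply hyp1 | apply hyp0].
  - eapply r_orE; [apply (delta0_dec _ (ball t A)); constructor; exact HA | apply r_orI1, hyp0 |].
    apply r_orI2; eapply r_exE; [eapply mp_closed; [apply ball_markov, HA | apply hyp0] |].
    (* at the counterexample [x < t] given by bounded Markov, [neg_tr (shift C) A] yields [C] *)
    eapply r_orE; [eapply mp_closed; [exact b1 |] | |].
    + eapply mp; [apply allE_var0; by_hyp | apply dneg_intro; eapply r_andE1, hyp0].
    + apply r_botE; eapply mp; [eapply r_andE2, hyp1 | apply hyp0].
    + apply hyp0.
Qed.

Lemma faithful_bex C A t : delta0 A -> tr_faithful (shift C) A -> tr_faithful C (bex t A).
Proof.
  intros HA [f1 b1]; split; apply r_impI; simpl.
  - apply dneg_intro; eapply r_exE; [apply hyp0 |]; apply exI_var0.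
    apply r_andI; [apply dneg_intro; eapply r_andE1, hyp0 |].
    eapply mp_closed; [exact f1 | eapply r_andE2, hyp0].
  - eapply r_orE; [apply (delta0_dec _ (bex t A)); constructor; exact HA | apply r_orI1, hyp0 |].
    apply r_orI2; eapply mp; [apply hyp1 |]; apply r_impI.
    eapply r_exE; [apply hyp0 |].
    eapply r_orE; [eapply mp_closed; [exact b1 | eapply r_andE2, hyp0] | | apply hyp0].
    eapply r_orE; [apply lt_dec | |].
    + apply r_botE; eapply mp; [by_hyp |].
      apply exI_var0, r_andI; [apply hyp0 | apply hyp1].
    + eapply mp; [eapply r_andE1, hyp2 |].
      apply r_impI, r_botE; eapply mp; [apply hyp1 | apply hyp0].
Qed.

Lemma delta0_faithful A : delta0 A -> forall C, tr_faithful C A.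
Proof.
  induction 1; intros C.
  - split; apply r_impI; [apply r_botE, hyp0 | apply r_orI2, hyp0].
  - apply dneg_faithful, eq_dec.
  - apply dneg_faithful, lt_dec.
  - apply faithful_and; auto.
  - apply faithful_or; auto.
  - apply faithful_imp; auto.
  - apply faithful_ball; auto.
  - apply faithful_bex; auto.
Qed.

Lemma sigma1_neg_tr D : sigma1 D -> forall C,
  [] ⊢ fimp D (neg_tr C D) /\ [] ⊢ fimp (neg_tr C D) (dneg C D).
Proof.
  induction 1 as [A HA | A HA IH]; intros C.
  - destruct (delta0_faithful A HA C) as [f b]; split; [exact f |].
    apply r_impI, r_impI; eapply r_orE; [eapply mp_closed; [exact b | apply hyp1] | |].
    + eapply mp; [apply hyp1 | apply hyp0].
    + apply hyp0.
  - destruct (IH (shift C)) as [f b]; simpl; split; apply r_impI.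
    + apply dneg_intro; eapply r_exE; [apply hyp0 |]; apply exI_var0.
      eapply mp_closed; [exact f | apply hyp0].
    + apply r_impI; eapply mp; [apply hyp1 |]; apply r_impI.
      eapply r_exE; [apply hyp0 |].
      eapply mp; [eapply mp_closed; [exact b | apply hyp0] |]; apply r_impI.
      eapply mp; [by_hyp | apply exI_var0, hyp0].
Qed.

(** * The translation of the induction axioms *)

Definition prov_equiv (A B : form) : Prop := [] ⊢ fimp A B /\ [] ⊢ fimp B A.

Lemma prov_equiv_trans A B C : prov_equiv A B -> prov_equiv B C -> prov_equiv A C.
Proof.
  intros [ab ba] [bc cb]; split; apply r_impI; eapply mp_closed;
    [exact bc | eapply mp_closed; [exact ab | apply hyp0]
    | exact ba | eapply mp_closed; [exact cb | apply hyp0]].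
Qed.

Lemma prov_equiv_ex A B : prov_equiv A B -> prov_equiv (fex A) (fex B).
Proof.
  intros [ab ba]; split; apply r_impI; eapply r_exE; try apply hyp0; apply exI_var0;
    eapply mp_closed; [exact ab | apply hyp0 | exact ba | apply hyp0].
Qed.

Lemma ex_or_l A E : prov_equiv (fex (f_or A (shift E))) (f_or (fex A) E).
Proof.
  split; apply r_impI.
  - eapply r_exE; [apply hyp0 |]; eapply r_orE; [apply hyp0 | |].
    + apply r_orI1, exI_var0, hyp0.
    + apply r_orI2, hyp0.
  - eapply r_orE; [apply hyp0 | |].
    + eapply r_exE; [apply hyp0 |]; apply exI_var0, r_orI1, hyp0.
    + apply r_exI with (t := tzero), r_orI2.
      exact (eq_rect_r (fun X => _ ⊢ X) (hyp0 _ E) (inst_shift E tzero)).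
Qed.

Lemma ex_or_r D A : prov_equiv (fex (f_or (shift D) A)) (f_or D (fex A)).
Proof.
  split; apply r_impI.
  - eapply r_exE; [apply hyp0 |]; eapply r_orE; [apply hyp0 | |].
    + apply r_orI1, hyp0.
    + apply r_orI2, exI_var0, hyp0.
  - eapply r_orE; [apply hyp0 | |].
    + apply r_exI with (t := tzero), r_orI1.
      exact (eq_rect_r (fun X => _ ⊢ X) (hyp0 _ D) (inst_shift D tzero)).
    + eapply r_exE; [apply hyp0 |]; apply exI_var0, r_orI2, hyp0.
Qed.

Lemma sigma1_or_delta0 E : sigma1 E -> forall D, delta0 D ->
  exists K, sigma1 K /\ prov_equiv K (f_or D E).
Proof.
  induction 1 as [A HA | A HA IH]; intros D HD.
  - exists (f_or D A); split; [repeat constructor; assumption | split; apply r_impI, hyp0].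
  - destruct (IH (shift D) (delta0_subst _ HD _)) as [K [HK eqK]].
    exists (fex K); split; [apply s1_ex, HK |].
    eapply prov_equiv_trans; [apply prov_equiv_ex, eqK | apply ex_or_r].
Qed.

Lemma sigma1_or D E : sigma1 D -> sigma1 E -> exists K, sigma1 K /\ prov_equiv K (f_or D E).
Proof.
  intros HD; revert E; induction HD as [A HA | A HA IH]; intros E HE.
  - apply sigma1_or_delta0; assumption.
  - destruct (IH (shift E) (sigma1_subst _ HE _)) as [K [HK eqK]].
    exists (fex K); split; [apply s1_ex, HK |].
    eapply prov_equiv_trans; [apply prov_equiv_ex, eqK | apply ex_or_l].
Qed.

Lemma ind_ax_equiv G H : prov_equiv G H -> [] ⊢ ind_ax H -> [] ⊢ ind_ax G.
Proof.
  intros [GH HG] IH; unfold ind_ax; apply r_impI.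
  assert (Hall : [fand (inst G tzero) (fall (fimp G (subst succ_sub G)))] ⊢ fall H).
  { eapply mp_closed; [exact IH |]; apply r_andI.
    - eapply mp; [apply (prf_closed_subst _ (scons tzero tvar) _ GH) | eapply r_andE1, hyp0].
    - apply r_allI, r_impI; eapply mp; [apply (prf_closed_subst _ succ_sub _ GH) |].
      eapply mp; [| eapply mp_closed; [exact HG | apply hyp0]].
      apply allE_var0; eapply r_andE2; apply hyp1. }
  apply r_allI; eapply mp_closed; [exact HG |].
  apply allE_var0, (prf_shift _ (fall H)), Hall.
Qed.

Lemma neg_tr_ind_ax_ha0 C D E : sigma1 C -> sigma1 D -> sigma1 E ->
  [] ⊢ neg_tr C (ind_ax (fimp (fimp D E) E)).
Proof.
  intros HC HD HE; rewrite neg_tr_ind_ax; set (c := shift C).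
  destruct (sigma1_or D E HD HE) as [K [HK [k1 k2]]].
  destruct (sigma1_neg_tr D HD c) as [fD bD], (sigma1_neg_tr E HE c) as [fE bE].
  apply (ind_ax_equiv _ (fimp (fimp K c) c)).
  2: { rewrite <- (subst_id (ind_ax _)); apply ax_inst, ha0_ind; [exact HK |].
       apply sigma1_subst, HC. }
  split; simpl; apply r_impI, r_impI.
  - eapply mp; [eapply mp_closed; [exact bE |] |].
    + eapply mp; [apply hyp1 |]; apply r_impI.
      eapply mp_closed; [apply neg_tr_of_C |].
      eapply mp; [eapply mp_closed; [exact bD | apply hyp0] |]; apply r_impI.
      eapply mp; [apply hyp2 | eapply mp_closed; [exact k2 | apply r_orI1, hyp0]].
    + apply r_impI; eapply mp; [apply hyp1 | eapply mp_closed; [exact k2 | apply r_orI2, hyp0]].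
  - eapply mp_closed; [apply (neg_tr_stable E c) |]; apply r_impI.
    eapply mp; [apply hyp2 |]; apply r_impI.
    eapply r_orE; [eapply mp_closed; [exact k1 | apply hyp0] | |].
    + eapply mp; [apply hyp2 |].
      eapply mp; [apply hyp3 | eapply mp_closed; [exact fD | apply hyp0]].
    + eapply mp; [apply hyp2 | eapply mp_closed; [exact fE | apply hyp0]].
Qed.

(** * Soundness of the translation and conservativity *)

Lemma wk_under G A B X : A :: G ⊢ X -> A :: B :: G ⊢ X.
Proof. intros H; eapply prf_weaken; [exact H | intros x [<- | Hx]; simpl; tauto]. Qed.

Lemma basic_ax_delta0 A : basic_ax A -> delta0 A.
Proof. destruct 1; repeat constructor. Qed.

Lemma neg_tr_ax C A s : sigma1 C -> HA0_ax A -> [] ⊢ neg_tr C (subst s A).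
Proof.
  intros HC [A' Hb | D E HD HE].
  - destruct (delta0_faithful _ (delta0_subst _ (basic_ax_delta0 _ Hb) s) C) as [f _].
    eapply mp_closed; [exact f | apply ax_inst, ha0_basic, Hb].
  - rewrite subst_ind_ax; simpl.
    apply neg_tr_ind_ax_ha0; [| apply sigma1_subst ..]; assumption.
Qed.

Theorem neg_tr_sound G A : prf true HA0_ax G A ->
  forall C, sigma1 C -> map (neg_tr C) G ⊢ neg_tr C A.
Proof.
  induction 1; intros C0 HC; simpl in *.
  - apply r_hyp, in_map, H.
  - apply prf_closed, neg_tr_ax; assumption.
  - apply r_impI, IHprf, HC.
  - eapply mp; [apply IHprf1 | apply IHprf2]; exact HC.
  - apply r_andI; [apply IHprf1 | apply IHprf2]; exact HC.
  - eapply r_andE1, IHprf, HC.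
  - eapply r_andE2, IHprf, HC.
  - apply dneg_intro, r_orI1, IHprf, HC.
  - apply dneg_intro, r_orI2, IHprf, HC.
  - eapply dneg_elim; [apply (IHprf1 C0 HC) |].
    eapply r_orE; [apply hyp0 | apply wk_under, IHprf2 | apply wk_under, IHprf3]; exact HC.
  - eapply mp_closed; [apply neg_tr_of_C | apply IHprf, HC].
  - apply r_allI; rewrite <- map_neg_tr_shift; apply IHprf, sigma1_subst, HC.
  - rewrite neg_tr_inst; apply r_allE, IHprf, HC.
  - apply dneg_intro; eapply r_exI; rewrite <- neg_tr_inst; apply IHprf, HC.
  - eapply dneg_elim; [apply (IHprf1 C0 HC) |].
    eapply r_exE; [apply hyp0 |].
    pose proof (IHprf2 (shift C0) (sigma1_subst _ HC _)) as IH; simpl in IH.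
    rewrite map_neg_tr_shift, neg_tr_shift in IH; apply wk_under, IH.
  - apply dneg_intro, r_eqrefl.
  - eapply dneg_elim; [apply (IHprf1 C0 HC) |].
    rewrite neg_tr_inst; eapply r_eqelim; [apply hyp0 |].
    rewrite <- neg_tr_inst; apply wk, IHprf2, HC.
  - eapply mp_closed; [apply neg_tr_stable | apply IHprf, HC].
Qed.

Lemma sigma1_conservative A : sigma1 A -> PA0_proves A -> HA0_proves A.
Proof.
  intros HA HP.
  pose proof (neg_tr_sound _ _ HP A HA) as HN.
  destruct (sigma1_neg_tr A HA A) as [_ back].
  eapply mp; [eapply mp_closed; [exact back | exact HN] | apply r_impI, hyp0].
Qed.

Lemma pi2_conservative A : pi2 A -> PA0_proves A -> HA0_proves A.
Proof.
  induction 1 as [A HA | A HA IH]; intros HP.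
  - apply sigma1_conservative; assumption.
  - apply r_allI, IH.
    pose proof (r_allE _ _ _ _ (tvar 0) (prf_subst _ _ _ _ HP shift_sub)) as HA'.
    rewrite inst_up_shift in HA'; exact HA'.
Qed.

Theorem lemma3p4 :
  (forall A : form, sigma1 A -> PA0_proves A -> HA0_proves A) /\
  (forall A : form, pi2 A -> sentence A -> PA0_proves A -> HA0_proves A).
Proof.
  split.
  - exact sigma1_conservative.
  -
    intros A HA _; exact (pi2_conservative A HA).
Qed.
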